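(* Assume $p\equiv-1\pmod 6$ and let $q=p^f$. Let $S=\{1,5\}\times\{1,\dots,q-1\}$, and let $p$ act on $S$ by $(b,a)\mapsto(b',a')$ where $b'=6-b$ and $a'\in\{1,\dots,q-1\}$ is determined by $$a'\equiv pa-\tfrac{p+1}{6}b+1\pmod{q-1}.$$ Let $S_0=\{(1,a):0<a<q/6\}$ and $S_1=\{(5,a):5q/6<a<q\}$. Then every orbit $o$ of the group $\langle p\rangle$ generated by this action satisfies $|o\cap S_0|=|o\cap S_1|$.
   Context: The map $(b,a)\mapsto(b',a')$ is a bijection of $S$ (it corresponds to multiplication by $p$ on pairs $(i,j)$ with $i\in\{\pm1\}\subset(\mathbb Z/6)^\times$, $j\in\mathbb Z/6(q-1)\mathbb Z$, $j\equiv 6a-b$, $i\equiv b\bmod 6$), so $\langle p\rangle$ acts on the finite set $S$. *)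

From mathcomp Require Import all_boot all_order all_algebra.
Set Implicit Arguments. Unset Strict Implicit. Unset Printing Implicit Defensive.
Import GRing.Theory Num.Theory.

(* Points (b,a) are encoded in the ambient finite type 'I_6 * 'I_q;
   the set S = {1,5} x {1,...,q-1} is the predicate inS. *)
Definition inS (q : nat) (x : 'I_6 * 'I_q) : bool :=
  ((x.1 == 1 :> nat) || (x.1 == 5 :> nat)) && (0 < x.2)%N.

Definition inS0 (q : nat) (x : 'I_6 * 'I_q) : bool :=
  (x.1 == 1 :> nat) && (0 < x.2)%N && (6 * x.2 < q)%N.

Definition inS1 (q : nat) (x : 'I_6 * 'I_q) : bool :=
  (x.1 == 5 :> nat) && (5 * q < 6 * x.2)%N.

(* The action of p: (b,a) |-> (6-b, a') with a' in {1,...,q-1},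
   a' = p a - ((p+1)/6) b + 1 (mod q-1).  (Values outside S are irrelevant.) *)
Definition actp (p q : nat) (x : 'I_6 * 'I_q) : 'I_6 * 'I_q :=
  let b := nat_of_ord x.1 in
  let a := nat_of_ord x.2 in
  let r : nat :=
    absz ((p%:Z * a%:Z - ((p + 1) %/ 6)%N%:Z * b%:Z + 1) %% (q.-1)%:Z)%Z in
  (insubd x.1 (6 - b)%N, insubd x.2 (if r == 0%N then q.-1 else r)).

From mathcomp Require Import all_boot all_order all_algebra zify ring.
Set Implicit Arguments.
Unset Strict Implicit.

(* Writing a point (b, a) of S as its code 6a - b, S becomes the set of residues
   in (0, 6(q-1)) prime to 6 and the action of p becomes multiplication by p
   modulo 6(q-1); S0 consists of the codes below q-1 that are 5 mod 6 and S1 of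
   the codes above 5(q-1) that are 1 mod 6.  Since p^f = q = 1 + (q-1),
   multiplication by p^f adds (q-1)(e mod 6) to a code e, so it keeps e mod q-1.
   For odd f it maps S0 onto S1 and S1 onto S0; for even f the powers of q run
   p e through all six lifts of its residue mod q-1.  Either way every code in
   S0 (resp. S1) has some p^(ft+c) e in S1 (resp. S0), with c = 0 for odd f and
   c = 1 for even f.  Points of S0, as well as points of S1, are determined by
   their code mod q-1, and multiplication by p^c is invertible mod q-1, so
   e |-> p^c e mod (q-1) injects each of o ∩ S0 and o ∩ S1 into the other. *)

Lemma expn_mod6 p n : p %% 6 = 5 -> p ^ n %% 6 = if odd n then 5 else 1.
Proof.
move=> hp; elim: n => [|n IH] //.
by rewrite expnS -modnMm IH hp /=; case: (odd n).
Qed.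

Lemma mulSn_mod M J : M.+1 * J = J + M * (J %% 6) %[mod 6 * M].
Proof.
have hJ := divn_eq J 6.
have -> : M.+1 * J = J %/ 6 * (6 * M) + (J + M * (J %% 6)) by rewrite {1 3}hJ; ring.
by rewrite modnMDl.
Qed.

Lemma expSn_mul_mod M J t : 6 %| M ->
  (M.+1) ^ t * J = J + t * M * (J %% 6) %[mod 6 * M].
Proof.
move=> /dvdnP[m ->]; elim: t => [|t IH]; first by rewrite expn0 mul1n mul0n addn0.
rewrite expnS -mulnA -modnMmr IH modnMmr mulSn_mod.
have -> : (J + t * (m * 6) * (J %% 6)) %% 6 = J %% 6.
  have -> : t * (m * 6) * (J %% 6) = t * m * (J %% 6) * 6 by ring.
  by rewrite addnC modnMDl.
congr (_ %% _); ring.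
Qed.

Lemma expSn_orbit_lift M J i : 0 < M -> 6 %| M -> J < 6 * M ->
  (J %% 6) ^ 2 = 1 %[mod 6] -> i < 6 ->
  exists t, (M.+1) ^ t * J %% (6 * M) = i * M + J %% M.
Proof.
move=> hM h6M hJM hu hi.
have hw : J %/ M < 6 by rewrite ltn_divLR.
have hs : J %% M < M by rewrite ltn_pmod.
have [k hk] : exists k, (J %% 6) ^ 2 = k * 6 + 1.
  by exists ((J %% 6) ^ 2 %/ 6); rewrite {1}(divn_eq ((J %% 6) ^ 2) 6) hu.
(* J mod 6 is its own inverse mod 6, hence the exponent below. *)
exists (J %% 6 * (i + 6 - J %/ M)); rewrite expSn_mul_mod // {1}(divn_eq J M).
move: (J %/ M) (J %% M) (J %% 6) hw hs hk => w s u hw hs hk.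
have -> : w * M + s + u * (i + 6 - w) * M * u = (1 + k * (i + 6 - w)) * (6 * M) + (i * M + s).
  set d := i + 6 - w.
  have hdM : w * M + d * M = i * M + 6 * M by rewrite -!mulnDl /d; congr (_ * _); lia.
  have hu2 : u * d * M * u = d * M + 6 * (k * (d * M)).
    have -> : u * d * M * u = u ^ 2 * (d * M) by ring.
    by rewrite hk; ring.
  rewrite hu2 (_ : w * M + s + _ = w * M + d * M + s + 6 * (k * (d * M))); last ring.
  by rewrite hdM; ring.
have hiM : i * M <= 5 * M by rewrite leq_mul2r -ltnS hi orbT.
rewrite modnMDl modn_small //; lia.
Qed.

Lemma expn_period_mod p f M t c e : p ^ f = M.+1 ->
  p ^ (f * t + c) * e = p ^ c * e %[mod M].
Proof.
move=> hpf; rewrite expnD expnM hpf -mulnA -modnMml -modnXm.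
by rewrite -addn1 addnC modnDr modnXm exp1n modnMml mul1n.
Qed.

Lemma expn_mulK_mod p f M c e e' : c <= f -> p ^ f = M.+1 ->
  p ^ c * e = p ^ c * e' %[mod M] -> e = e' %[mod M].
Proof.
move=> hcf hpf he.
have hinv n : n = p ^ (f - c) * (p ^ c * n) %[mod M].
  have := @expn_period_mod p f M 1 0 n hpf; rewrite muln1 addn0 expn0 mul1n => <-.
  by rewrite mulnA -expnD subnK.
by rewrite hinv -modnMmr he modnMmr -hinv.
Qed.

Definition code0 M e := (e < M) && (e %% 6 == 5).
Definition code1 M e := (5 * M < e) && (e %% 6 == 1).

Section Residues.

Variables p f M : nat.
Hypotheses (hp6 : p %% 6 = 5) (hpf : p ^ f = M.+1) (hM : 0 < M).

Lemma pred_expn_mod6 : M %% 6 = if odd f then 4 else 0.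
Proof. by have := expn_mod6 f hp6; rewrite hpf; case: (odd f); lia. Qed.

Lemma even_orbit_lift e i : ~~ odd f -> (p * e %% 6) ^ 2 = 1 %[mod 6] -> i < 6 ->
  exists t, p ^ (f * t + 1) * e %% (6 * M) = i * M + p * e %% M.
Proof.
move=> hf he hi; have h6M : 6 %| M by rewrite /dvdn pred_expn_mod6 (negbTE hf).
have [|||t ht] := @expSn_orbit_lift M (p * e %% (6 * M)) i hM h6M.
- by rewrite ltn_pmod // muln_gt0.
- by rewrite modn_dvdm ?dvdn_mulr.
- by [].
exists t; rewrite expnD expnM hpf expn1 -mulnA -modnMmr ht modn_dvdm //.
exact: dvdn_mull.
Qed.

(* The exponent offset [~~ odd f] is read as a nat: 0 for odd f, 1 for even f. *)
Lemma code0_orbit_code1 e : code0 M e ->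
  exists t, code1 M (p ^ (f * t + ~~ odd f) * e %% (6 * M)).
Proof.
case/andP=> he /eqP he6; have := pred_expn_mod6.
case hf: (odd f) => hM6.
- exists 1; rewrite muln1 addn0 hpf mulSn_mod he6 modn_small; last lia.
  by apply/andP; split; [lia | apply/eqP; lia].
- have hpe6 : p * e %% 6 = 1 by rewrite -modnMm hp6 he6.
  have [|t ht] := @even_orbit_lift e 5 (negbT hf) _ (ltnSn 5); first by rewrite hpe6.
  have : p * e %% M %% 6 = 1 by rewrite modn_dvdm // /dvdn hM6.
  by exists t; rewrite /= ht; apply/andP; split; [lia | apply/eqP; lia].
Qed.

Lemma code1_orbit_code0 e : e < 6 * M -> code1 M e ->
  exists t, code0 M (p ^ (f * t + ~~ odd f) * e %% (6 * M)).
Proof.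
move=> heM /andP[he /eqP he6]; have := pred_expn_mod6.
case hf: (odd f) => hM6.
- exists 1; rewrite muln1 addn0 hpf mulSn_mod he6.
  have -> : e + M * 1 = 1 * (6 * M) + (e - 5 * M) by lia.
  by rewrite modnMDl modn_small; [apply/andP; split; [lia | apply/eqP; lia] | lia].
- have hpe6 : p * e %% 6 = 5 by rewrite -modnMm hp6 he6.
  have [|t ht] := @even_orbit_lift e 0 (negbT hf) _ (ltn0Sn 5); first by rewrite hpe6.
  have : p * e %% M %% 6 = 5 by rewrite modn_dvdm // /dvdn hM6.
  by exists t; rewrite /= ht mul0n add0n; apply/andP; split; [rewrite ltn_pmod | apply/eqP].
Qed.

End Residues.

Definition code {q} (x : 'I_6 * 'I_q) : nat := 6 * x.2 - x.1.

Section Encoding.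

Variable q : nat.

Lemma code_bounds (x : 'I_6 * 'I_q) : inS x -> 0 < code x < 6 * q.-1.
Proof.
case: x => [b a] /andP[/= hb ha]; rewrite /code /=.
by have := ltn_ord a; case/orP: hb => /eqP ->; lia.
Qed.

Lemma code_inj : {in @inS q &, injective code}.
Proof.
move=> [b a] [b' a'] /andP[/= hb ha] /andP[/= hb' ha']; rewrite /code /= => he.
have [eb ea] : b = b' :> nat /\ a = a' :> nat.
  by move: hb hb' he => /orP[] /eqP -> /orP[] /eqP ->; lia.
by congr pair; apply: val_inj.
Qed.

Lemma inS0E (x : 'I_6 * 'I_q) : inS0 x = inS x && code0 q.-1 (code x).
Proof.
case: x => [[[|[|[|[|[|[|b]]]]]] hb] a] //=; rewrite /inS0 /inS /code0 /code /=.
all: have := ltn_ord a; lia.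
Qed.

Lemma inS1E (x : 'I_6 * 'I_q) : inS1 x = inS x && code1 q.-1 (code x).
Proof.
case: x => [[[|[|[|[|[|[|b]]]]]] hb] a] //=; rewrite /inS1 /inS /code1 /code /=.
all: have := ltn_ord a; lia.
Qed.

Lemma inS0_code_mod_inj : {in @inS0 q &, injective (fun y => code y %% q.-1)}.
Proof.
move=> y y'; rewrite /in_mem /= !inS0E => /andP[yS /andP[hy _]] /andP[y'S /andP[hy' _]] /=.
by rewrite !modn_small // => /code_inj; apply.
Qed.

Lemma inS1_code_mod_inj : {in @inS1 q &, injective (fun y => code y %% q.-1)}.
Proof.
have mod_top z : 5 * q.-1 < z < 6 * q.-1 -> z %% q.-1 = z - 5 * q.-1.
  move=> hz; rewrite {1}(_ : z = 5 * q.-1 + (z - 5 * q.-1)); last lia.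
  by rewrite modnMDl modn_small; lia.
move=> y y'; rewrite /in_mem /= !inS1E => /andP[yS /andP[hy _]] /andP[y'S /andP[hy' _]] /=.
have /andP[_ hyq] := code_bounds yS; have /andP[_ hy'q] := code_bounds y'S.
rewrite !mod_top ?hy ?hy' // => e; apply: code_inj => //; lia.
Qed.

End Encoding.

Section Action.

Variables p q : nat.
Hypotheses (hp6 : p %% 6 = 5) (hq : 1 < q).

Lemma code_actp (x : 'I_6 * 'I_q) : inS x ->
  inS (actp p x) /\ code (actp p x) = p * code x %% (6 * q.-1).
Proof.
case: x => [b a] /andP[/= hb ha]; set M := q.-1.
have hb15 : b = 1 :> nat \/ b = 5 :> nat by case/orP: hb => /eqP; auto.
have haM : a <= M by have := ltn_ord a; rewrite /M; lia.
have hM : 0 < M by rewrite /M; lia.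
have hd : 6 * ((p + 1) %/ 6) = p + 1.
  by rewrite mulnC divnK // /dvdn -modnDml hp6.
have hpa : p <= p * a by rewrite leq_pmulr.
set Z := p * a + 1 - (p + 1) %/ 6 * b.
have hZ : ((p%:Z * a%:Z - ((p + 1) %/ 6)%N%:Z * b%:Z + 1) = Z%:Z)%R.
  by rewrite /Z; case: hb15 => ->; lia.
(* The new code is 6a' - (6 - b) with a' = Z (mod q-1). *)
have hpZ : p * (6 * a - b) + (6 - b) = 6 * Z by rewrite /Z; case: hb15 => ->; lia.
rewrite /actp /= hZ modz_nat absz_nat -/M.
set a' := if Z %% M == 0 then M else Z %% M.
have ha' : 0 < a' <= M by rewrite /a'; case: eqP; have := ltn_pmod Z hM; lia.
have ha'Z : 6 * a' = 6 * Z %[mod 6 * M].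
  rewrite -[RHS]muln_modr // /a'; case: eqP => [-> | _]; first by rewrite modnn muln0.
  by rewrite modn_small // ltn_pmul2l // ltn_pmod.
rewrite /inS /code /=.
have -> : (insubd b (6 - b) : nat) = 6 - b by rewrite val_insubd; case: hb15 => ->.
have -> : (insubd a a' : nat) = a'.
  by rewrite val_insubd ifT //; move: ha'; rewrite /M; lia.
split; first by apply/andP; split; [case: hb15 => ->|lia].
rewrite -[LHS](@modn_small _ (6 * M)); last lia.
apply/eqP; rewrite -(eqn_modDr (6 - b)) subnK ?hpZ; last lia.
exact/eqP.
Qed.

Lemma code_iter_actp k (x : 'I_6 * 'I_q) : inS x ->
  inS (iter k (@actp p q) x) /\ code (iter k (@actp p q) x) = p ^ k * code x %% (6 * q.-1).
Proof.
move=> hx; elim: k => [|k [hS hc]].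
  by rewrite mul1n modn_small //; case/andP: (code_bounds hx).
have [hS' hc'] := code_actp hS.
by rewrite iterS hc' hc modnMmr expnS mulnA.
Qed.

End Action.

Lemma card_le_of_image_sub (T : finType) (U : eqType) (A B : {set T}) (g h : T -> U) :
  {in A &, injective g} -> (forall y, y \in A -> exists2 z, z \in B & h z = g y) ->
  #|A| <= #|B|.
Proof.
move=> g_inj gAB; rewrite !cardE -(size_map g) -(size_map h (enum B)).
apply: uniq_leq_size.
  by rewrite map_inj_in_uniq ?enum_uniq // => y y'; rewrite !mem_enum; apply: g_inj.
move=> u /mapP[y]; rewrite mem_enum => /gAB[z zB <-] ->.
by apply/mapP; exists z; rewrite ?mem_enum.
Qed.

Section Orbit.

Variables p f : nat.
Hypotheses (hp6 : p %% 6 = 5) (hq : 1 < p ^ f).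
Let q := p ^ f.
Let M := q.-1.
Variable x : 'I_6 * 'I_q.

Let hpf : p ^ f = M.+1. Proof. by rewrite /M /q; lia. Qed.
Let hM : 0 < M. Proof. by rewrite /M /q; lia. Qed.
Let hf : 0 < f. Proof. by move: hq; rewrite /q; case: f. Qed.

Lemma card_orbit_le (P Q : pred ('I_6 * 'I_q)) :
  {subset P <= @inS q} -> {in P &, injective (fun y => code y %% M)} ->
  (forall y, P y -> exists t, Q (iter (f * t + ~~ odd f) (@actp p q) y)) ->
  #|[set y | fconnect (@actp p q) x y & P y]| <= #|[set y | fconnect (@actp p q) x y & Q y]|.
Proof.
move=> PS P_inj PQ.
apply: (@card_le_of_image_sub _ _ _ _ (fun y => p ^ (~~ odd f) * code y %% M) (fun z => code z %% M)).
- move=> y y'; rewrite !inE => /andP[_ Py] /andP[_ Py'] e; apply: P_inj => //=.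
  by apply: (@expn_mulK_mod p f M (~~ odd f)) => //; case: (odd f).
- move=> y; rewrite inE => /andP[xy Py]; have [t Qz] := PQ y Py.
  exists (iter (f * t + ~~ odd f) (@actp p q) y).
    by rewrite inE Qz andbT (connect_trans xy) ?fconnect_iter.
  have [_ ->] := code_iter_actp hp6 (hq : 1 < q) (f * t + ~~ odd f) (PS y Py).
  by rewrite modn_dvdm ?dvdn_mull // expn_period_mod.
Qed.

Lemma inS0_orbit_inS1 y : inS0 y -> exists t, inS1 (iter (f * t + ~~ odd f) (@actp p q) y).
Proof.
rewrite inS0E => /andP[yS /(code0_orbit_code1 hp6 hpf hM)[t ht]]; exists t.
by have [zS hz] := code_iter_actp hp6 hq (f * t + ~~ odd f) yS; rewrite inS1E zS hz.
Qed.

Lemma inS1_orbit_inS0 y : inS1 y -> exists t, inS0 (iter (f * t + ~~ odd f) (@actp p q) y).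
Proof.
rewrite inS1E => /andP[yS hy]; have /andP[_ hyM] := code_bounds yS.
have [t ht] := code1_orbit_code0 hp6 hpf hM hyM hy; exists t.
by have [zS hz] := code_iter_actp hp6 hq (f * t + ~~ odd f) yS; rewrite inS0E zS hz.
Qed.

End Orbit.

Unset Implicit Arguments.

Theorem proposition10p2 (p f : nat) (hp : prime p) (hp6 : p %% 6 = 5)
    (hf : 0 < f) (x : 'I_6 * 'I_(p ^ f)) :
  inS x ->
  #|[set y : 'I_6 * 'I_(p ^ f) | fconnect (@actp p (p ^ f)) x y & inS0 y]| =
  #|[set y : 'I_6 * 'I_(p ^ f) | fconnect (@actp p (p ^ f)) x y & inS1 y]|.
Proof.
(* The counts agree for every x. *)
move=> _; have hq : 1 < p ^ f by rewrite -{1}(expn0 p) ltn_exp2l ?prime_gt1.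
apply/eqP; rewrite eqn_leq; apply/andP; split.
- apply: (@card_orbit_le p f hp6 hq x (@inS0 _) (@inS1 _)).
  + by move=> y; rewrite /in_mem /= inS0E => /andP[].
  + exact: inS0_code_mod_inj.
  + exact: inS0_orbit_inS1.
- apply: (@card_orbit_le p f hp6 hq x (@inS1 _) (@inS0 _)).
  + by move=> y; rewrite /in_mem /= inS1E => /andP[].
  + exact: inS1_code_mod_inj.
  + exact: inS1_orbit_inS0.
Qed.
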